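(* Let $G$ satisfy conditions (1)–(5) below and let $C_G\subset\mathbb{P}^n$, $n=d-g$, be the union of lines defined by an admissible labeling of $\tilde G$ (see context). Then $C_G$ is arithmetically Cohen–Macaulay, i.e. the restriction map $H^0(\mathbb{P}^n,\mathcal{O}_{\mathbb{P}^n}(k))\to H^0(C_G,\mathcal{O}_{C_G}(k))$ is surjective for all $k\ge 0$.
   Context: Work over an algebraically closed field of characteristic zero, $S=k[x_0,\ldots,x_{d-g}]$. Conditions on the finite graph $G=(V,E)$, $d=|V|$, $g=|E|-d+1$: (1) connected; (2) simple; (3) every vertex has degree at most $3$ and some vertex has degree less than $3$; (4) the shortest path between any two distinct vertices of degree $3$ has at least $3$ edges; (5) no triangles. Let $\tilde G$ be obtained from $G$ by attaching one loop at each vertex of degree $1$. An admissible labeling of the edges of $\tilde G$: for each vertex of degree $3$ choose two indices $j\neq k$ in $\{0,\ldots,d-g\}$ and label its three edges $e_j,e_k,e_j-e_k$; label each remaining edge $e_i$ with an unused index, distinct indices being used throughout. An index $i$ appears on an edge labeled $e_i$ or $\pm(e_i-e_j)$. For each vertex $v$: if $v$ has degree $3$ with edges $e_j,e_k,e_j-e_k$, $I_v=(x_i: i\neq j,k)$; otherwise $I_v$ is generated by the $x_i$ with $i$ not appearing on an edge of $\tilde G$ at $v$, together with $x_j-x_k$ if some edge at $v$ is labeled $e_j-e_k$. $L_v=V(I_v)$, $C_G=\bigcup_v L_v$. *)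

From HB Require Import structures.
From mathcomp Require Import all_boot all_order all_algebra.
From mathcomp Require Import mpoly.
Set Implicit Arguments. Unset Strict Implicit. Unset Printing Implicit Defensive.
Import GRing.Theory.
Local Open Scope ring_scope.

Section Graph.
Variables (V : finType) (adj : rel V).

Definition nbhd (v : V) : {set V} := [set w | adj v w].
Definition deg (v : V) : nat := #|nbhd v|.
Definition edges : {set {set V}} :=
  [set e : {set V} | [exists x, exists y, adj x y && (e == [set x; y])]].
Definition genus : int := (#|edges|%:Z - #|V|%:Z + 1)%R.

Definition connected_graph : Prop := forall u v, connect adj u v.
Definition simple_graph : Prop := ssrbool.symmetric adj /\ irreflexive adj.
Definition degree_cond : Prop := (forall v, deg v <= 3)%N /\ exists v, (deg v < 3)%N.
Definition deg3_far : Prop :=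
  forall u v, u != v -> deg u = 3%N -> deg v = 3%N ->
    ~~ adj u v /\ (forall w, ~~ (adj u w && adj w v)).
Definition triangle_free : Prop := forall a b c, ~~ [&& adj a b, adj b c & adj c a].
End Graph.

Inductive label (m : nat) := LE of 'I_m | LD of 'I_m & 'I_m.
(* LE i stands for e_i ; LD j k stands for e_j - e_k *)

Section Labeling.
Variables (V : finType) (adj : rel V) (m : nat).
(* lab u v : label of the edge {u,v} of G (meaningful when adj u v);
   loopl v : label of the loop attached at v (meaningful when deg v = 1). *)
Variables (lab : V -> V -> label m) (loopl : V -> label m).

Definition at_v (v : V) (l : label m) : Prop :=
  (exists w, adj v w /\ lab v w = l) \/ (deg adj v = 1%N /\ loopl v = l).

Definition appears (i : 'I_m) (l : label m) : Prop :=
  l = LE i \/ exists j, l = LD i j \/ l = LD j i.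

Definition admissible : Prop :=
  [/\
      forall u v, adj u v -> lab u v = lab v u,
      forall v, deg adj v = 3%N -> exists j k, j != k /\
        exists a b c, [/\ nbhd adj v = [set a; b; c], lab v a = LE j, lab v b = LE k
                        & lab v c = LD j k \/ lab v c = LD k j],
      (forall u v, adj u v -> deg adj u <> 3%N -> deg adj v <> 3%N ->
         exists i, lab u v = LE i)
      /\ (forall v, deg adj v = 1%N -> exists i, loopl v = LE i)
    &
      [/\ forall u v u' v' i, adj u v -> adj u' v' -> lab u v = LE i -> lab u' v' = LE i ->
            [set u; v] = [set u'; v'],
          forall u v w i, adj u v -> deg adj w = 1%N -> lab u v = LE i -> loopl w <> LE i
        & forall w w' i, deg adj w = 1%N -> deg adj w' = 1%N ->
            loopl w = LE i -> loopl w' = LE i -> w = w']].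

Variable K : fieldType.

(* p (a point of the affine cone over P^(m-1)) lies on L_v = V(I_v) *)
Definition onL (v : V) (p : 'I_m -> K) : Prop :=
  if deg adj v == 3%N then
    forall i, ~ at_v v (LE i) -> p i = 0
  else
    (forall i, ~ (exists l, at_v v l /\ appears i l) -> p i = 0)
    /\ (forall j k, at_v v (LD j k) -> p j = p k).

(* the homogeneous ideal I(C_G) of C_G = \bigcup_v L_v (reduced structure) *)
Definition inIC (F : {mpoly K[m]}) : Prop :=
  forall v (p : 'I_m -> K), onL v p -> F.@[p] = 0.

(* An element of H^0(C_G, O_{C_G}(k)), described on the standard affine cover
   D_+(x_i): on D_+(x_i), a section of (S/I_C)~(k) is F_i / x_i^(e_i) with
   F_i homogeneous of degree k + e_i; they must agree in (S/I_C)_{x_i x_j}. *)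
Definition global_section (k : nat) (F : 'I_m -> {mpoly K[m]}) (e : 'I_m -> nat) : Prop :=
  (forall i, F i \is (k + e i)%N.-homog) /\
  (forall i j, exists N : nat,
      inIC (('X_i * 'X_j) ^+ N * (F i * 'X_j ^+ e j - F j * 'X_i ^+ e i))).

Definition restriction_surjective (k : nat) : Prop :=
  forall F e, global_section k F e ->
    exists H : {mpoly K[m]}, H \is k.-homog /\
      forall i, exists N : nat, inIC ('X_i ^+ N * (H * 'X_i ^+ e i - F i)).

End Labeling.

(* Each L_v is a line of P^n spanned by a coordinate point e_i and by e_q or e_q + e_y,
   read off the labels at v.  A section of O(k) on C_G restricts on each line to a binary
   form of degree k in (x_i, x_q); over an infinite field this follows by clearing
   denominators in one variable.  The glued form
     H = sum_j F_j(e_j) x_j^k + sum_v (mixed monomials of the binary form of L_v)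
   restricts correctly to every line: since G has no triangles, its degree-3 vertices are
   far apart and the labels use distinct indices, the mixed part of L_v vanishes on L_u
   unless u is joined to the degree-3 vertex v by an edge labeled e_q - e_y, and then the
   point e_q + e_y, common to both lines, accounts exactly for those terms.  For k = 0 the
   forms are constants that agree along edges, hence everywhere by connectivity. *)

From HB Require Import structures.
From mathcomp Require Import all_boot all_order all_algebra.
From mathcomp Require Import mpoly.
From mathcomp Require Import ring.
From Stdlib Require Import Classical ClassicalEpsilon.

Set Implicit Arguments.
Unset Strict Implicit.
Unset Printing Implicit Defensive.
Import GRing.Theory.
Local Open Scope ring_scope.

(** * Binary forms on a line *)

Section LineRestriction.
Variables (K : fieldType) (m : nat).
Implicit Types (F : {mpoly K[m]}) (u w p : 'I_m -> K).

Definition mpoly_line F u w : {poly K} :=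
  mmap polyC (fun i => (u i)%:P + w i *: 'X) F.

Lemma horner_mpoly_line F u w t :
  (mpoly_line F u w).[t] = F.@[fun i => u i + t * w i].
Proof.
rewrite /mpoly_line /mmap mevalE -horner_evalE rmorph_sum /=.
apply: eq_bigr => mm _; rewrite rmorphM /= horner_evalE hornerC rmorph_prod.
congr (_ * _); apply: eq_bigr => i _; rewrite rmorphXn /= horner_evalE.
by rewrite hornerD hornerC hornerZ hornerX mulrC.
Qed.

Lemma meval_homog_scale d F c p : F \is d.-homog ->
  F.@[fun i => c * p i] = c ^+ d * F.@[p].
Proof.
move=> hF; rewrite !mevalE mulr_sumr; apply: eq_big_seq => mm hm.
under eq_bigr do rewrite exprMn.
by rewrite big_split /= prodrXr -mdegE (dhomog_mf hF hm) mulrCA.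
Qed.

Lemma size_mpoly_line d F u w : F \is d.-homog ->
  (size (mpoly_line F u w) <= d.+1)%N.
Proof.
move=> hF; apply: leq_trans (size_sum _ _ _) _; apply/bigmax_leqP_seq => mm hm _.
apply: leq_trans (size_polyMleq _ _) _.
have -> : d = (\sum_i mm i)%N by rewrite -mdegE (dhomog_mf hF hm).
have size_lin i : (size ((u i)%:P + w i *: 'X)%R <= 2)%N.
  apply: leq_trans (size_polyD _ _) _; rewrite geq_max (leq_trans (size_polyC_leq1 _)) //.
  by apply: leq_trans (size_scale_leq _ _) _; rewrite size_polyX.
have size_pow i : (size (((u i)%:P + w i *: 'X) ^+ mm i)%R <= mm i + 1)%N.
  apply: leq_trans (size_poly_exp_leq _ _) _; rewrite addn1 ltnS.
  by rewrite -[leqRHS]mul1n leq_mul2r -subn1 leq_subLR size_lin orbT.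
have size_prod : (size (mmap1 (fun i => (u i)%:P + w i *: 'X)%R mm) <= (\sum_i mm i).+1)%N.
  apply: leq_trans (size_poly_prod_leq _ _) _.
  rewrite leq_subLR addnS ltnS -sum1_card -big_split /=.
  by apply: leq_sum => i _; rewrite addnC size_pow.
rewrite size_polyC; case: (_ != 0%R); rewrite /= ?add0n ?add1n //.
exact: leq_trans (leq_pred _) size_prod.
Qed.

End LineRestriction.

Section BinaryForms.
Variables (K : fieldType) (k : nat).
Implicit Types (P : {poly K}) (a b : K).

Definition binform P a b := \sum_(c < k.+1) P`_c * a ^+ c * b ^+ (k - c).

Definition binform_inner P a b :=
  \sum_(c < k.+1 | (0 < c < k)%N) P`_c * a ^+ c * b ^+ (k - c).

Lemma binform_dehomog P a b : (size P <= k.+1)%N -> b != 0 ->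
  binform P a b = b ^+ k * P.[a / b].
Proof.
move=> szP b0; rewrite (horner_coef_wide _ szP) mulr_sumr; apply: eq_bigr => c _.
rewrite mulrCA -mulrA; congr (_ * _).
have -> : b ^+ k = b ^+ (k - c) * b ^+ c by rewrite -exprD subnK // -ltnS.
by rewrite expr_div_n mulrCA -mulrA mulfV ?expf_neq0 // mulr1 mulrC.
Qed.

Lemma binform_split P a b : (0 < k)%N ->
  binform P a b = P`_k * a ^+ k + P`_0 * b ^+ k + binform_inner P a b.
Proof.
move=> k0; rewrite /binform (bigD1 ord_max) //= (bigD1 ord0) /=; last first.
  by rewrite -val_eqE /= eq_sym -lt0n.
rewrite subnn subn0 !expr0 !mulr1 addrA; congr (_ + _); apply: eq_bigl => c.
by rewrite -!val_eqE /= lt0n andbC ltn_neqAle -ltnS ltn_ord andbT.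
Qed.

Lemma binform10 P : binform P 1 0 = P`_k.
Proof.
rewrite /binform big_ord_recr /= subnn expr1n !mulr1 big1 ?add0r // => c _.
by rewrite expr0n subn_eq0 leqNgt ltn_ord mulr0.
Qed.

Lemma binform01 P : binform P 0 1 = P`_0.
Proof.
rewrite /binform big_ord_recl /= expr0 expr1n !mulr1 big1 ?addr0 // => c _.
by rewrite expr0n mulr0 mul0r.
Qed.

Lemma binform_k0 P a b : k = 0%N -> binform P a b = P`_0.
Proof. by move=> k0; rewrite /binform k0 big_ord1 /= !expr0 !mulr1. Qed.

Lemma binform_inner0l P b : binform_inner P 0 b = 0.
Proof.
by rewrite /binform_inner big1 // => c /andP[c0 _]; rewrite expr0n gtn_eqF // mulr0 mul0r.
Qed.

Lemma binform_inner0r P a : binform_inner P a 0 = 0.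
Proof.
by rewrite /binform_inner big1 // => c /andP[_ ck]; rewrite expr0n subn_eq0 leqNgt ck mulr0.
Qed.

Lemma binform_inner_diag P b : binform_inner P b b = b ^+ k * binform_inner P 1 1.
Proof.
rewrite mulr_sumr; apply: eq_bigr => c /andP[_ ck].
by rewrite !expr1n !mulr1 -mulrA -exprD subnKC ?(ltnW ck) // mulrC.
Qed.

Definition binform_poly P a : {poly K} :=
  \sum_(c < k.+1) (P`_c * a ^+ c) *: 'X^(k - c).

Lemma horner_binform_poly P a b : (binform_poly P a).[b] = binform P a b.
Proof.
rewrite -horner_evalE rmorph_sum; apply: eq_bigr => c _.
by rewrite /= horner_evalE hornerZ hornerXn.
Qed.

End BinaryForms.

Lemma eq_poly_punctured (K : fieldType) (p q : {poly K}) : [pchar K] =i pred0 ->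
  (forall t, t != 0 -> p.[t] = q.[t]) -> p = q.
Proof.
move=> charK0 pq; apply/eqP; rewrite -subr_eq0; apply: contraT => pq0.
have natr_eq0 := (pcharf0P _).1 charK0.
have := max_poly_roots pq0 (rs := [seq i%:R | i <- iota 1 (size (p - q))]).
rewrite size_map size_iota ltnn; apply.
  apply/allP => _ /mapP[i + ->]; rewrite mem_iota => /andP[i0 _].
  by rewrite /root hornerD hornerN pq ?subrr // natr_eq0 -lt0n.
rewrite map_inj_in_uniq ?iota_uniq // => i j _ _.
wlog lij : i j / (i <= j)%N.
  by move=> H; case/orP: (leq_total i j) => /H // + eij => /(_ (esym eij)).
move=> eij; apply/eqP; rewrite eqn_leq lij -subn_eq0 -natr_eq0 natrB //=.
by rewrite eij subrr.
Qed.

Section LinePoints.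
Variables (K : fieldType) (m : nat).
Implicit Types (i j q : 'I_m) (be : 'I_m -> K) (a b : K).

Definition basis_pt i : 'I_m -> K := fun j => (j == i)%:R.

Definition line_pt i be a b : 'I_m -> K := fun j => a * basis_pt i j + b * be j.

Lemma basis_pt_id i : basis_pt i i = 1.
Proof. by rewrite /basis_pt eqxx. Qed.

Lemma basis_pt_neq i j : j != i -> basis_pt i j = 0.
Proof. by rewrite /basis_pt => /negbTE ->. Qed.

Lemma line_pt_off i be a b j : j != i -> line_pt i be a b j = b * be j.
Proof. by move=> ji; rewrite /line_pt basis_pt_neq // mulr0 add0r. Qed.

Lemma line_pt_base i be a b : be i = 0 -> line_pt i be a b i = a.
Proof. by move=> bei; rewrite /line_pt basis_pt_id bei mulr0 mulr1 addr0. Qed.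

Lemma line_pt_dir i q be a b : i != q -> be q = 1 -> line_pt i be a b q = b.
Proof. by move=> iq beq; rewrite line_pt_off 1?eq_sym // beq mulr1. Qed.

Lemma vanish_off_iff (P : 'I_m -> Prop) (s : seq 'I_m) (p : 'I_m -> K) :
  (forall j, P j <-> j \in s) ->
  (forall j, ~ P j -> p j = 0) <-> (forall j, j \notin s -> p j = 0).
Proof.
by move=> Ps; split=> p0 j Pj; apply: p0; [rewrite Ps; exact/negP | apply/negP; rewrite -Ps].
Qed.

Lemma line_pt_basisE i q (p : 'I_m -> K) : i != q ->
  p =1 line_pt i (basis_pt q) (p i) (p q) <-> forall j, j \notin [:: i; q] -> p j = 0.
Proof.
move=> iq; split=> [pE j|p0 j].
  by rewrite !inE negb_or => /andP[ji jq]; rewrite pE line_pt_off // basis_pt_neq ?mulr0.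
have [->|ji] := eqVneq j i; first by rewrite line_pt_base // basis_pt_neq // eq_sym.
have [->|jq] := eqVneq j q; first by rewrite line_pt_dir ?basis_pt_id.
by rewrite line_pt_off // basis_pt_neq ?mulr0 // p0 // !inE negb_or ji.
Qed.

Lemma line_pt_pairE i q y (p : 'I_m -> K) : i != q -> i != y -> q != y ->
  p =1 line_pt i (basis_pt q \+ basis_pt y) (p i) (p q) <->
  (forall j, j \notin [:: i; q; y] -> p j = 0) /\ p y = p q.
Proof.
move=> iq iy qy; have yq : y != q by rewrite eq_sym.
have dir_q : (basis_pt q \+ basis_pt y) q = 1 by rewrite /= basis_pt_id basis_pt_neq ?addr0.
split=> [pE|[p0 pyq] j].
  split=> [j|]; last first.
    by rewrite pE line_pt_off 1?eq_sym //= basis_pt_id basis_pt_neq ?add0r ?mulr1.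
  rewrite !inE !negb_or => /and3P[ji jq jy].
  by rewrite pE line_pt_off //= !basis_pt_neq ?addr0 ?mulr0.
have [->|ji] := eqVneq j i; first by rewrite line_pt_base //= !basis_pt_neq ?addr0 // eq_sym.
have [->|jq] := eqVneq j q; first by rewrite line_pt_dir.
have [->|jy] := eqVneq j y.
  by rewrite line_pt_off 1?eq_sym //= basis_pt_id basis_pt_neq ?add0r ?mulr1.
by rewrite line_pt_off //= !basis_pt_neq ?addr0 ?mulr0 // p0 // !inE !negb_or ji jq.
Qed.

End LinePoints.

Arguments basis_pt {K m} i j.
Arguments basis_pt_id {K m} i.
Arguments basis_pt_neq {K m} [i j].

Section FormOnLine.
Variables (K : fieldType) (m k : nat).
Hypothesis charK0 : [pchar K] =i pred0.
Variables (F : 'I_m -> {mpoly K[m]}) (e : 'I_m -> nat).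
Hypothesis F_homog : forall i, F i \is (k + e i)%N.-homog.
Variables (i0 q : 'I_m) (be : 'I_m -> K).
Hypotheses (i0_neq_q : i0 != q) (be_i0 : be i0 = 0) (be_q : be q = 1).
Local Notation pt := (line_pt i0 be).
Hypothesis F_compat : forall a b i j, pt a b i != 0 -> pt a b j != 0 ->
  (F i).@[pt a b] * pt a b j ^+ e j = (F j).@[pt a b] * pt a b i ^+ e i.

Let Pq := mpoly_line (F q) be (basis_pt i0).

Let horner_Pq t : Pq.[t] = (F q).@[pt t 1].
Proof. by rewrite horner_mpoly_line; apply: meval_eq => i; rewrite /line_pt mul1r addrC. Qed.

(* Compatibility on the chart [x_q = 1] gives [F i0 = x_i0 ^ e i0 * F q] along the line,
   so the degree bound on [F i0] bounds [Pq]. *)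
Let size_Pq : (size Pq <= k.+1)%N.
Proof.
have restr_i0 : mpoly_line (F i0) be (basis_pt i0) = Pq * 'X^(e i0).
  apply: eq_poly_punctured => // t t0; rewrite hornerM hornerXn horner_Pq.
  rewrite horner_mpoly_line (meval_eq _ (fun i => addrC _ _)) -[X in X.@[_]]/(F i0).
  have := F_compat (i := i0) (j := q) (a := t) (b := 1).
  rewrite line_pt_base // line_pt_dir // expr1n mulr1 => <- //; last exact: oner_neq0.
  by apply: meval_eq => i; rewrite /line_pt mul1r.
have := size_mpoly_line be (basis_pt i0) (F_homog i0); rewrite restr_i0.
have [->|Pq0] := eqVneq Pq 0; first by rewrite size_poly0.
by rewrite size_mulXn // -addSn addnC leq_add2r.
Qed.

Let binform_off_axis a b i : b != 0 -> pt a b i != 0 ->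
  binform k Pq a b * pt a b i ^+ e i = (F i).@[pt a b].
Proof.
move=> b0 pi0.
have Fq_pt : (F q).@[pt a b] = b ^+ (k + e q) * Pq.[a / b].
  rewrite horner_Pq -meval_homog_scale //; apply: meval_eq => j.
  by rewrite /line_pt mulrDr mul1r mulrA mulrCA mulfV ?mulr1.
apply: (mulIf (expf_neq0 (e q) b0)).
have := F_compat (j := q) pi0; rewrite line_pt_dir // => -> //.
by rewrite Fq_pt (binform_dehomog _ size_Pq b0) exprD; ring.
Qed.

Let binform_on_axis a : a != 0 ->
  binform k Pq a 0 * a ^+ e i0 = (F i0).@[pt a 0].
Proof.
move=> a0.
suff /(congr1 (horner^~ 0)) : binform_poly k Pq a * (a ^+ e i0)%:P =
    mpoly_line (F i0) (fun i => a * basis_pt i0 i) be.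
  by rewrite hornerM hornerC horner_binform_poly horner_mpoly_line.
apply: eq_poly_punctured => // b b0.
rewrite hornerM hornerC horner_binform_poly horner_mpoly_line.
by rewrite -{2}(line_pt_base a b be_i0) binform_off_axis // line_pt_base.
Qed.

Lemma binform_on_line : exists P : {poly K},
  forall a b i, pt a b i != 0 -> binform k P a b * pt a b i ^+ e i = (F i).@[pt a b].
Proof.
exists Pq => a b i pi0; have [b0|b0] := eqVneq b 0; last exact: binform_off_axis.
have a0 : a != 0 by apply: contraNneq pi0; rewrite b0 => ->; rewrite /line_pt !mul0r addr0.
apply: (mulIf (expf_neq0 (e i0) a0)).
have := F_compat pi0 (j := i0); rewrite line_pt_base // b0 => -> //.
by rewrite -binform_on_axis // mulrAC.
Qed.

End FormOnLine.

(** * The lines L_v *)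

Lemma extends_of_pointwise (V : finType) (adj : rel V) (m : nat)
    (lab : V -> V -> label m) (loopl : V -> label m) (K : fieldType)
    (F : 'I_m -> {mpoly K[m]}) (e : 'I_m -> nat) (H : {mpoly K[m]}) :
  (forall v p i, onL adj lab loopl v p -> p i != 0 -> H.@[p] * p i ^+ e i = (F i).@[p]) ->
  forall i, exists N : nat, inIC adj lab loopl ('X_i ^+ N * (H * 'X_i ^+ e i - F i)).
Proof.
move=> HF i; exists 1%N => v p vp.
rewrite rmorphM rmorphXn rmorphB rmorphM rmorphXn /= !mevalXU expr1.
by have [->|pi] := eqVneq (p i) 0; rewrite ?mul0r // (HF v) // subrr mulr0.
Qed.

Section Labeling.
Variables (V : finType) (adj : rel V) (m : nat).
Variables (lab : V -> V -> label m) (loopl : V -> label m).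
Hypotheses (adj_simple : simple_graph adj) (deg3_apart : deg3_far adj)
  (adj_triangle_free : triangle_free adj) (lab_admissible : admissible adj lab loopl).

Implicit Types (u v w z : V) (i j q x y : 'I_m).
Local Notation dg := (deg adj).
Local Notation atv := (at_v adj lab loopl).

Lemma in_nbhd u v : (v \in nbhd adj u) = adj u v.
Proof. by rewrite inE. Qed.

Lemma adj_sym u v : adj u v -> adj v u.
Proof. by case: adj_simple => adjC _; rewrite adjC. Qed.

Lemma adj_irr u : ~~ adj u u.
Proof. by case: adj_simple => _ ->. Qed.

Lemma adj_neq u v : adj u v -> u != v.
Proof. by apply: contraTneq => ->; exact: adj_irr. Qed.

Lemma lab_sym u v : adj u v -> lab u v = lab v u.
Proof. by case: lab_admissible => labC _ _ _; exact: labC. Qed.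

Lemma lab_symE u v l : adj u v -> lab u v = l -> lab v u = l.
Proof. by move=> uv <-; rewrite lab_sym // adj_sym. Qed.

Lemma adj_deg_neq0 u v : adj u v -> dg u != 0%N.
Proof. by move=> uv; rewrite -lt0n; apply/card_gt0P; exists v; rewrite in_nbhd. Qed.

Lemma loopl_LE u : dg u = 1%N -> exists i, loopl u = LE i.
Proof. by case: lab_admissible => _ _ [_ h] _; exact: h. Qed.

Lemma deg3_nadj u v : dg u = 3%N -> dg v = 3%N -> ~~ adj u v.
Proof.
move=> u3 v3; have [->|uv] := eqVneq u v; first exact: adj_irr.
by case: (deg3_apart uv u3 v3).
Qed.

Lemma deg3_common_nbr u v w : dg u = 3%N -> dg v = 3%N -> adj w u -> adj w v -> u = v.
Proof.
move=> u3 v3 wu wv; apply/eqP; apply: contraT => uv.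
by case: (deg3_apart uv u3 v3) => _ /(_ w); rewrite (adj_sym wu) wv.
Qed.

Lemma no_triangle u v w : adj u v -> adj v w -> adj w u -> False.
Proof. by move=> uv vw wu; have := adj_triangle_free u v w; rewrite uv vw wu. Qed.

Lemma LE_edge u v : adj u v -> dg u != 3%N -> dg v != 3%N -> exists i, lab u v = LE i.
Proof. by case: lab_admissible => _ _ [h _] _ uv /eqP u3 /eqP v3; exact: h. Qed.

Lemma LD_edge_deg3 u w x y : adj u w -> lab u w = LD x y -> dg u != 3%N -> dg w = 3%N.
Proof.
move=> uw uwxy u3; apply/eqP; apply: contraTT isT => w3.
by have [i] := LE_edge uw u3 w3; rewrite uwxy.
Qed.

Lemma at_LD_edge u x y : dg u != 3%N -> atv u (LD x y) ->
  exists w, [/\ adj u w, lab u w = LD x y & dg w = 3%N].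
Proof.
move=> u3 [[w [uw uwxy]]|[u1 l]]; first by exists w; split=> //; exact: LD_edge_deg3 uwxy u3.
by have [i] := loopl_LE u1; rewrite l.
Qed.

Lemma deg3_LD_labels w u x y : dg w = 3%N -> adj w u -> lab w u = LD x y ->
  [/\ x != y, atv w (LE x), atv w (LE y) & forall i, atv w (LE i) -> i = x \/ i = y].
Proof.
move=> w3 wu wuxy; case: lab_admissible => _ h3 _ _.
have [j [k [jk [a [b [c [Nw wa wb wc]]]]]]] := h3 w w3.
have nbr z : adj w z -> [\/ z = a, z = b | z = c].
  by rewrite -in_nbhd Nw !inE => /orP[/orP[]|] /eqP ->; [apply: Or31|apply: Or32|apply: Or33].
have adj_wa : adj w a by rewrite -in_nbhd Nw !inE eqxx.
have adj_wb : adj w b by rewrite -in_nbhd Nw !inE eqxx orbT.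
have at_jk i : atv w (LE i) -> i = j \/ i = k.
  case=> [[z [wz]]|[w1 _]]; last by rewrite w3 in w1.
  case: (nbr z wz) => ->; rewrite ?wa ?wb; [by case=> ->; left|by case=> ->; right|].
  by case: wc => ->.
have at_j : atv w (LE j) by left; exists a.
have at_k : atv w (LE k) by left; exists b.
case: (nbr u wu) => eu; rewrite eu ?wa ?wb in wuxy => //.
case: wc; rewrite wuxy => -[-> ->]; first by split=> // i /at_jk.
by split; rewrite 1?eq_sym // => i /at_jk[]; auto.
Qed.

Lemma LE_shared u v i : atv u (LE i) -> atv v (LE i) -> u != v ->
  adj u v /\ lab u v = LE i.
Proof.
case: lab_admissible => _ _ _ [edges_uniq edge_loop_uniq loops_uniq].
move=> [[w [uw uwi]]|[u1 ui]] [[w' [vw' vw'i]]|[v1 vi]] uv.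
- have E := edges_uniq _ _ _ _ _ uw vw' uwi vw'i.
  have : v \in [set u; w] by rewrite E !inE eqxx.
  by rewrite !inE eq_sym (negbTE uv) => /eqP ->.
- by case: (edge_loop_uniq _ _ _ _ uw v1 uwi).
- by case: (edge_loop_uniq _ _ _ _ vw' u1 vw'i).
- by rewrite (loops_uniq _ _ _ u1 v1 ui vi) eqxx in uv.
Qed.

Lemma LE_shared_LD u v i x y : adj u v -> lab u v = LD x y ->
  atv u (LE i) -> atv v (LE i) -> False.
Proof.
by move=> uv uvxy ui vi; have [_] := LE_shared ui vi (adj_neq uv); rewrite uvxy.
Qed.

Lemma LE_LD_disjoint u i x y : dg u != 3%N -> atv u (LE i) -> atv u (LD x y) ->
  i != x /\ i != y.
Proof.
move=> u3 ui uxy; have [w [uw uwxy w3]] := at_LD_edge u3 uxy.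
have [_ wx wy _] := deg3_LD_labels w3 (adj_sym uw) (lab_symE uw uwxy).
by split; apply: contraPneq (LE_shared_LD uw uwxy ui) => ->.
Qed.

Lemma at_LD_unique u x y x' y' : dg u != 3%N -> atv u (LD x y) -> atv u (LD x' y') ->
  x = x' /\ y = y'.
Proof.
move=> u3 uxy uxy'; have [w [uw uwxy w3]] := at_LD_edge u3 uxy.
have [w' [uw' uwxy' w'3]] := at_LD_edge u3 uxy'.
by move: uwxy'; rewrite -(deg3_common_nbr w3 w'3 uw uw') uwxy => -[].
Qed.

Definition reaches u i := atv u (LE i) \/
  exists w x y, [/\ dg u != 3%N, adj u w, lab u w = LD x y, dg w = 3%N & atv w (LE i)].

Lemma reaches_deg3 u i : dg u = 3%N -> reaches u i -> atv u (LE i).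
Proof. by move=> u3 [//|[w [x [y [/eqP]]]]]. Qed.

Lemma reaches_LE_deg3 u z q : reaches u q -> atv z (LE q) -> dg z = 3%N ->
  u = z \/ adj u z.
Proof.
move=> [uq|[w [x [y [_ uw _ w3 wq]]]]] zq z3.
  by have [->|uz] := eqVneq u z; [left | right; case: (LE_shared uq zq uz)].
have [<-|wz] := eqVneq w z; first by right.
by case: (LE_shared wq zq wz) => wz'; rewrite (negbTE (deg3_nadj w3 z3)) in wz'.
Qed.

Lemma reaches_pair_LE u v i j : u != v -> reaches u i -> reaches u j -> i != j ->
  atv v (LE i) -> atv v (LE j) ->
  [/\ dg v = 3%N, adj u v, dg u != 3%N & exists x y, lab u v = LD x y].
Proof.
move=> uv [ui|[w [x [y [u3 uw uwxy w3 wi]]]]] [uj|[w' [x' [y' [_ uw' uwxy' w'3 w'j]]]]] ij vi vj.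
- have [_ uvi] := LE_shared ui vi uv; have [_] := LE_shared uj vj uv.
  by rewrite uvi => -[/eqP]; rewrite (negbTE ij).
- have [adj_uv uvi] := LE_shared ui vi uv; have [ew'|w'v] := eqVneq w' v.
    by rewrite ew' uvi in uwxy'.
  have [w'v' _] := LE_shared w'j vj w'v.
  by case: (no_triangle adj_uv (adj_sym w'v') (adj_sym uw')).
- have [adj_uv uvj] := LE_shared uj vj uv; have [ew|wv] := eqVneq w v.
    by rewrite ew uvj in uwxy.
  have [wv' _] := LE_shared wi vi wv.
  by case: (no_triangle adj_uv (adj_sym wv') (adj_sym uw)).
- move: w'j; rewrite -(deg3_common_nbr w3 w'3 uw uw') => wj.
  have [<-|wv] := eqVneq w v; first by split=> //; exists x, y.
  have [_ wvi] := LE_shared wi vi wv; have [_] := LE_shared wj vj wv.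
  by rewrite wvi => -[/eqP]; rewrite (negbTE ij).
Qed.

Lemma reaches_LD_absurd u v z i q y : u != v -> reaches u i -> reaches u q ->
  atv v (LE i) -> dg v != 3%N -> adj v z -> lab v z = LD q y -> False.
Proof.
move=> uv ui uq vi v3 vz vzqy; have z3 := LD_edge_deg3 vz vzqy v3.
have [_ zq _ _] := deg3_LD_labels z3 (adj_sym vz) (lab_symE vz vzqy).
have zi_vi : atv z (LE i) -> False := LE_shared_LD vz vzqy vi.
case: (reaches_LE_deg3 uq zq z3) => [ez|uz].
  by apply: zi_vi; rewrite -ez; apply: reaches_deg3 ui; rewrite ez.
case: ui => [ui|[w [x [x' [_ uw _ w3 wi]]]]].
  by case: (LE_shared ui vi uv) => adj_uv _; exact: no_triangle adj_uv vz (adj_sym uz).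
by apply: zi_vi; rewrite -(deg3_common_nbr w3 z3 uw uz).
Qed.

Lemma appears_LE j i : appears j (LE i) <-> j = i.
Proof. by split=> [[[]|[? []]]|->] //; left. Qed.

Lemma appears_LD j x y : appears j (LD x y) <-> j = x \/ j = y.
Proof.
split=> [[//|[z [[-> _]|[_ ->]]]]|[->|->]]; auto; right.
  by exists y; left.
by exists x; right.
Qed.

Variable K : fieldType.
Hypothesis deg_le3 : forall v, (dg v <= 3)%N.
Local Notation onl := (@onL V adj m lab loopl K).

Lemma onL_support u p i : onl u p -> p i != 0 -> reaches u i.
Proof.
rewrite /onL; case: eqP => [u3 p0|/eqP u3 [p0 _]] pi.
  by left; apply: NNPP => /p0 pi0; rewrite pi0 eqxx in pi.
have [[l [ul]]|] := classic (exists l, atv u l /\ appears i l); last first.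
  by move/p0/eqP; rewrite (negbTE pi).
case: l ul => [i'|x y] ul; first by move/appears_LE => ->; left.
move=> ixy; right; have [w [uw uwxy w3]] := at_LD_edge u3 ul.
have [_ wx wy _] := deg3_LD_labels w3 (adj_sym uw) (lab_symE uw uwxy).
by exists w, x, y; split=> //; case/appears_LD: ixy => ->.
Qed.

(* [chart u i q be]: L_u is spanned by e_i and be, where be = e_q or e_q + e_y, and
   (x_i, x_q) are coordinates on it. *)
Inductive chart (u : V) : 'I_m -> 'I_m -> ('I_m -> K) -> Prop :=
| ChartDeg3 i q of dg u = 3%N & i != q & (forall j, atv u (LE j) <-> j \in [:: i; q]) :
    chart u i q (basis_pt q)
| ChartLE i q of dg u != 3%N & i != q & (forall l, atv u l <-> l = LE i \/ l = LE q) :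
    chart u i q (basis_pt q)
| ChartLD i q y z of dg u != 3%N & adj u z & lab u z = LD q y &
    (forall l, atv u l <-> l = LE i \/ l = LD q y) :
    chart u i q (basis_pt q \+ basis_pt y).

Lemma LD_chart_indices u i q y z : dg u != 3%N -> adj u z -> lab u z = LD q y ->
  (forall l, atv u l <-> l = LE i \/ l = LD q y) -> [/\ dg z = 3%N, q != y, i != q & i != y].
Proof.
move=> u3 uz uzqy atu; have z3 := LD_edge_deg3 uz uzqy u3.
have [qy _ _ _] := deg3_LD_labels z3 (adj_sym uz) (lab_symE uz uzqy).
by have [] := LE_LD_disjoint u3 (proj2 (atu _) (or_introl erefl))
  (proj2 (atu _) (or_intror erefl)).
Qed.

Lemma chart_frame u i q be : chart u i q be ->
  [/\ i != q, be i = 0, be q = 1 & atv u (LE i)].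
Proof.
case=> [{}i {}q _ iq atu|{}i {}q _ iq atu|{}i {}q y z u3 uz uzqy atu].
- by rewrite basis_pt_id (basis_pt_neq iq); split=> //; apply/atu; rewrite inE eqxx.
- by rewrite basis_pt_id (basis_pt_neq iq); split=> //; apply/atu; left.
have [_ qy iq iy] := LD_chart_indices u3 uz uzqy atu.
rewrite /= basis_pt_id (basis_pt_neq iq) (basis_pt_neq iy) (basis_pt_neq qy) !addr0.
by split=> //; apply/atu; left.
Qed.

Definition used u j := exists l, atv u l /\ appears j l.

Lemma onL_nondeg3E u p : dg u != 3%N ->
  onl u p <-> (forall j, ~ used u j -> p j = 0) /\ (forall x y, atv u (LD x y) -> p x = p y).
Proof. by move=> u3; rewrite /onL (negbTE u3). Qed.

Lemma used_at u l1 l2 j : (forall l, atv u l <-> l = l1 \/ l = l2) ->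
  used u j <-> appears j l1 \/ appears j l2.
Proof.
move=> atu; split=> [[l [/atu[]-> ]]|[]]; auto; move=> h.
  by exists l1; split=> //; apply/atu; left.
by exists l2; split=> //; apply/atu; right.
Qed.

Lemma chart_onL u i q be : chart u i q be ->
  forall p, onl u p <-> p =1 line_pt i be (p i) (p q).
Proof.
case=> [{}i {}q u3 iq atu|{}i {}q u3 iq atu|{}i {}q y z u3 uz uzqy atu] p.
- by rewrite /onL u3 eqxx line_pt_basisE //; apply: vanish_off_iff.
- rewrite onL_nondeg3E // line_pt_basisE // -(vanish_off_iff (P := used u)); last first.
    move=> j; rewrite used_at // !appears_LE !inE.
    by split=> [[]->|/orP[]/eqP]; rewrite ?eqxx ?orbT; auto.
  by split=> [[]//|p0]; split=> // x y /atu[].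
have [_ qy iq iy] := LD_chart_indices u3 uz uzqy atu.
rewrite onL_nondeg3E // line_pt_pairE // -(vanish_off_iff (P := used u)); last first.
  move=> j; rewrite used_at // appears_LE appears_LD !inE.
  by split=> [[|[]]->|/or3P[]/eqP]; rewrite ?eqxx ?orbT; auto.
split=> [[p0 pLD]|[p0 pyq]]; split=> //; first by rewrite (pLD q y) //; apply/atu; right.
by move=> x x' /atu[//|[-> ->]].
Qed.

Lemma chart_of_labels u i l : dg u != 3%N ->
  (forall l', atv u l' <-> l' = LE i \/ l' = l) -> l <> LE i ->
  exists q be, chart u i q be.
Proof.
move=> u3 atu; case: l atu => [q|x y] atu li.
  by exists q, (basis_pt q); apply: ChartLE => //; apply: contra_notN li => /eqP ->.
have [w [uw uwxy _]] := at_LD_edge u3 (proj2 (atu _) (or_intror erefl)).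
by exists x, (basis_pt x \+ basis_pt y); exact: ChartLD uw uwxy atu.
Qed.

Lemma chart_exists u : dg u != 0%N -> exists i q be, chart u i q be.
Proof.
move=> u0; case: lab_admissible => _ h3 _ [edges_uniq edge_loop_uniq _].
have [u3|u3] := eqVneq (dg u) 3%N.
  have [j [k [_ [a [b [c [Nu _ _ uc]]]]]]] := h3 u u3.
  have adj_uc : adj u c by rewrite -in_nbhd Nu !inE eqxx !orbT.
  have [x [y uxy]] : exists x y, lab u c = LD x y by case: uc => uc; do 2 eexists; exact: uc.
  have [xy ux uy only] := deg3_LD_labels u3 adj_uc uxy.
  exists x, y, (basis_pt y); apply: ChartDeg3 => // i; rewrite !inE.
  by split=> [/only[]->|/orP[]/eqP->]; rewrite ?eqxx ?orbT.
have : (dg u == 1%N) || (dg u == 2%N) by move: (deg_le3 u) u0 u3; case: (dg u) => [|[|[|[|]]]].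
case/orP=> /eqP du.
  have /cards1P[w Nu] : #|nbhd adj u| == 1%N by apply/eqP.
  have uw : adj u w by rewrite -in_nbhd Nu inE.
  have [l0 ul0] := loopl_LE du.
  exists l0; apply: (chart_of_labels (l := lab u w)) => // [l|uwl0].
    split=> [[[w' [+ <-]]|[_ <-]]|[->|->]]; [|by left|by right; split|by left; exists w].
    by rewrite -in_nbhd Nu inE => /eqP ->; right.
  exact: edge_loop_uniq uw du uwl0 ul0.
have /cards2P[w1 [w2 [w12 Nu]]] : #|nbhd adj u| == 2%N by apply/eqP.
have uw1 : adj u w1 by rewrite -in_nbhd Nu !inE eqxx.
have uw2 : adj u w2 by rewrite -in_nbhd Nu !inE eqxx orbT.
have atu l : atv u l <-> l = lab u w1 \/ l = lab u w2.
  split=> [[[w' [+ <-]]|[u1 _]]|[->|->]].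
  - by rewrite -in_nbhd Nu !inE => /orP[]/eqP->; auto.
  - by rewrite du in u1.
  - by left; exists w1.
  - by left; exists w2.
case e1: (lab u w1) atu => [i|x y] atu.
  exists i; apply: (chart_of_labels (l := lab u w2)) => // uw2i.
  have : w2 \in [set u; w1] by rewrite (edges_uniq _ _ _ _ _ uw1 uw2 e1 uw2i) !inE eqxx orbT.
  by rewrite !inE eq_sym (negbTE (adj_neq uw2)) eq_sym (negbTE w12).
case e2: (lab u w2) atu => [i|x' y'] atu.
  by exists i; apply: (chart_of_labels (l := LD x y)) => // l; rewrite atu; tauto.
have w1_3 := LD_edge_deg3 uw1 e1 u3; have w2_3 := LD_edge_deg3 uw2 e2 u3.
by rewrite (deg3_common_nbr w1_3 w2_3 uw1 uw2) eqxx in w12.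
Qed.

Lemma chart_overlap u v p i q be : u != v -> onl u p -> chart v i q be ->
  p i != 0 -> p q != 0 ->
  [/\ dg v = 3%N, adj u v, dg u != 3%N & exists x y, lab u v = LD x y].
Proof.
move=> uv up [{}i {}q _ iq atv_|{}i {}q _ iq atv_|{}i {}q y z v3 vz vzqy atv_] pi pq.
- apply: reaches_pair_LE (onL_support up pi) (onL_support up pq) _ _ _ => //.
    by apply/atv_; rewrite inE eqxx.
  by apply/atv_; rewrite !inE eqxx orbT.
- by apply: reaches_pair_LE (onL_support up pi) (onL_support up pq) _ _ _ => //; apply/atv_; auto.
case: (reaches_LD_absurd uv (onL_support up pi) (onL_support up pq) _ v3 vz vzqy).
by apply/atv_; left.
Qed.

Lemma onL_isolated u p : dg u = 0%N -> onl u p -> forall j, p j = 0.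
Proof.
rewrite /onL => u0; rewrite u0 => -[p0 _] j; apply: p0 => -[l [[[w [uw _]]|[u1 _]] _]].
  by move: (adj_deg_neq0 uw); rewrite u0.
by rewrite u0 in u1.
Qed.

Lemma LD_edge_neq u w x y : adj u w -> lab u w = LD x y -> x != y.
Proof.
move=> uw uwxy; have [u3|u3] := eqVneq (dg u) 3%N; first by case: (deg3_LD_labels u3 uw uwxy).
have w3 := LD_edge_deg3 uw uwxy u3.
by case: (deg3_LD_labels w3 (adj_sym uw) (lab_symE uw uwxy)).
Qed.

Lemma onL_basis_pt u i : atv u (LE i) -> onl u (basis_pt i).
Proof.
move=> ui; rewrite /onL; case: eqP => [_ j nuj|/eqP u3].
  by apply: basis_pt_neq; apply/eqP => ji; apply: nuj; rewrite ji.
split=> [j nused|j k ujk]; last first.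
  by have [ij ik] := LE_LD_disjoint u3 ui ujk; rewrite !basis_pt_neq // eq_sym.
apply: basis_pt_neq; apply/eqP => ji; apply: nused.
by exists (LE i); split=> //; exact/appears_LE.
Qed.

Lemma onL_LD_pt u w x y : adj u w -> lab u w = LD x y -> onl u (basis_pt x \+ basis_pt y).
Proof.
move=> uw uwxy; have xy := LD_edge_neq uw uwxy; have yx : y != x by rewrite eq_sym.
have pt0 j : j != x -> j != y -> (basis_pt x \+ basis_pt y) j = 0.
  by move=> jx jy; rewrite /= !basis_pt_neq ?addr0.
rewrite /onL; case: eqP => [u3 j nuj|/eqP u3].
  have [_ ux uy _] := deg3_LD_labels u3 uw uwxy.
  by apply: pt0; apply/eqP => ej; apply: nuj; rewrite ej.
have uxy : atv u (LD x y) by left; exists w.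
split=> [j nused|j k ujk]; last first.
  have [<- <-] := at_LD_unique u3 uxy ujk.
  by rewrite /= !basis_pt_id (basis_pt_neq xy) (basis_pt_neq yx) addr0 add0r.
by apply: pt0; apply/eqP => ej; apply: nused; exists (LD x y); split=> //; apply/appears_LD; auto.
Qed.

Lemma shared_point u w : adj u w ->
  exists p j, [/\ onl u p, onl w p & p j = 1].
Proof.
move=> uw; case uwl: (lab u w) => [i|x y].
  exists (basis_pt i), i; rewrite basis_pt_id; split=> //; apply: onL_basis_pt.
    by left; exists w.
  by left; exists u; rewrite -(lab_sym uw) adj_sym.
exists (basis_pt x \+ basis_pt y), x.
rewrite /= basis_pt_id (basis_pt_neq (LD_edge_neq uw uwl)) addr0.
split=> //; [exact: onL_LD_pt uwl | apply: (onL_LD_pt (adj_sym uw)); rewrite -(lab_sym uw) //].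
Qed.

Lemma line_pt_onL u i q be a b : chart u i q be -> onl u (line_pt i be a b).
Proof.
move=> c; have [iq bei beq _] := chart_frame c.
by apply: (proj2 (chart_onL c _)) => j; rewrite (line_pt_base a b bei) (line_pt_dir a b iq beq).
Qed.

Lemma chart_deg3_indices z i q be x y : dg z = 3%N -> chart z i q be ->
  atv z (LE x) -> atv z (LE y) -> x != y ->
  [/\ be = basis_pt q & (i = x /\ q = y) \/ (i = y /\ q = x)].
Proof.
move=> z3 [{}i {}q _ iq atz|{}i {}q z3'|{}i {}q y' w z3']; last 2 first.
- by rewrite z3 in z3'.
- by rewrite z3 in z3'.
move=> /atz + /atz; rewrite !inE => /orP[]/eqP-> /orP[]/eqP->; rewrite ?eqxx //; auto.
Qed.

Lemma restriction_isolated u k : connected_graph adj -> dg u = 0%N ->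
  restriction_surjective adj lab loopl K k.
Proof.
move=> conn u0 F e _; exists 0; split; first exact: dhomog0.
apply: extends_of_pointwise => v p i vp.
have /connectP[[|w s] /= path_s ev] := conn u v; last first.
  by case/andP: path_s => /adj_deg_neq0; rewrite u0.
by rewrite ev in vp; rewrite (onL_isolated u0 vp) eqxx.
Qed.

(** * Gluing the binary forms *)

Hypothesis charK0 : [pchar K] =i pred0.
Variables (k : nat) (F : 'I_m -> {mpoly K[m]}) (e : 'I_m -> nat).
Hypothesis F_section : global_section adj lab loopl k F e.

Lemma F_homog i : F i \is (k + e i)%N.-homog.
Proof. by case: F_section. Qed.

Lemma F_compat u p i j : onl u p -> p i != 0 -> p j != 0 ->
  (F i).@[p] * p j ^+ e j = (F j).@[p] * p i ^+ e i.
Proof.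
move=> up pi pj; case: F_section => _ /(_ i j) [N /(_ u p up)].
rewrite rmorphM rmorphXn rmorphB !rmorphM !rmorphXn /= !mevalXU => /eqP.
by rewrite mulf_eq0 expf_eq0 mulf_eq0 (negbTE pi) (negbTE pj) andbF subr_eq0 => /eqP.
Qed.

Record line_form u := LineForm {
  lf_i : 'I_m; lf_q : 'I_m; lf_dir : 'I_m -> K; lf_poly : {poly K};
  lf_chart : chart u lf_i lf_q lf_dir;
  lf_eval : forall a b j, line_pt lf_i lf_dir a b j != 0 ->
    binform k lf_poly a b * line_pt lf_i lf_dir a b j ^+ e j =
    (F j).@[line_pt lf_i lf_dir a b] }.

Hypothesis deg_neq0 : forall u, dg u != 0%N.

Lemma line_form_inhabited u : inhabited (line_form u).
Proof.
have [i [q [be c]]] := chart_exists (deg_neq0 u); have [iq bei beq _] := chart_frame c.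
have [P evalP] := binform_on_line charK0 F_homog iq bei beq
  (fun a b i j => F_compat (line_pt_onL a b c)).
exact: inhabits (LineForm c evalP).
Qed.

Definition lform u : line_form u := epsilon (line_form_inhabited u) (fun _ => True).

Local Notation lfi u := (lf_i (lform u)).
Local Notation lfq u := (lf_q (lform u)).
Local Notation lfdir u := (lf_dir (lform u)).
Local Notation lfP u := (lf_poly (lform u)).

Lemma lform_eval u p j : onl u p -> p j != 0 ->
  binform k (lfP u) (p (lfi u)) (p (lfq u)) * p j ^+ e j = (F j).@[p].
Proof.
move=> up pj; have pE := proj1 (chart_onL (lf_chart (lform u)) p) up.
by rewrite (meval_eq _ pE) [X in X ^+ e j](pE j) lf_eval // -pE.
Qed.

Lemma lform_coefk u : (lfP u)`_k = (F (lfi u)).@[basis_pt (lfi u)].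
Proof.
have [iq bei beq _] := chart_frame (lf_chart (lform u)).
have := @lf_eval u (lform u) 1 0 (lfi u).
rewrite (line_pt_base 1 0 bei) binform10 expr1n mulr1 => -> //; last exact: oner_neq0.
by apply: meval_eq => j; rewrite /line_pt mul1r mul0r addr0.
Qed.

Lemma lform_coef0 u : (lfP u)`_0 = (F (lfq u)).@[lfdir u].
Proof.
have [iq bei beq _] := chart_frame (lf_chart (lform u)).
have := @lf_eval u (lform u) 0 1 (lfq u).
rewrite (line_pt_dir 0 1 iq beq) binform01 expr1n mulr1 => -> //; last exact: oner_neq0.
by apply: meval_eq => j; rewrite /line_pt mul1r mul0r add0r.
Qed.

Definition diag_part p := \sum_(j < m) (F j).@[basis_pt j] * p j ^+ k.

Definition inner_part v p := binform_inner k (lfP v) (p (lfi v)) (p (lfq v)).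

(* The pure powers carry the values at the coordinate points; each line contributes only
   the mixed monomials of its binary form. *)
Definition glue : {mpoly K[m]} :=
  \sum_(j < m) (F j).@[basis_pt j] *: 'X_j ^+ k +
  \sum_v \sum_(c < k.+1 | (0 < c < k)%N)
      (lfP v)`_c *: ('X_(lfi v) ^+ c * 'X_(lfq v) ^+ (k - c)).

Lemma glue_homog : glue \is k.-homog.
Proof.
have X_homog j n : ('X_j ^+ n : {mpoly K[m]}) \is n.-homog.
  have X1 : ('X_j : {mpoly K[m]}) \is 1.-homog by rewrite dhomogX /= mdeg1.
  by have := dhomogMn n X1; rewrite mul1n.
rewrite rpredD //; first by apply: rpred_sum => j _; exact/dhomogZ/X_homog.
apply: rpred_sum => v _; apply: rpred_sum => c /andP[_ ck]; apply: dhomogZ.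
by have := dhomogM (X_homog (lfi v) c) (X_homog (lfq v) (k - c)%N); rewrite subnKC // ltnW.
Qed.

Lemma meval_glue p : glue.@[p] = diag_part p + \sum_v inner_part v p.
Proof.
rewrite mevalD !raddf_sum /=; congr (_ + _).
  by apply: eq_bigr => j _; rewrite /= mevalZ rmorphXn /= mevalXU.
apply: eq_bigr => v _; rewrite raddf_sum; apply: eq_bigr => c _.
by rewrite /= mevalZ rmorphM !rmorphXn /= !mevalXU mulrA.
Qed.

Lemma diag_part_supp (s : seq 'I_m) p : (0 < k)%N -> uniq s ->
  (forall j, j \notin s -> p j = 0) ->
  diag_part p = \sum_(j <- s) (F j).@[basis_pt j] * p j ^+ k.
Proof.
move=> k0 us p0; rewrite (big_uniq _ us) /diag_part (bigID (mem s)) /=.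
by rewrite [X in _ + X]big1 ?addr0 // => j /p0 ->; rewrite expr0n gtn_eqF // mulr0.
Qed.

Lemma inner_part_off_line u v p : u != v -> onl u p -> inner_part v p != 0 ->
  [/\ dg v = 3%N, adj u v, dg u != 3%N & exists x y, lab u v = LD x y].
Proof.
move=> uv up; rewrite /inner_part.
have [->|pi] := eqVneq (p (lfi v)) 0; first by rewrite binform_inner0l eqxx.
have [->|pq] := eqVneq (p (lfq v)) 0; first by rewrite binform_inner0r eqxx.
by move=> _; exact: chart_overlap uv up (lf_chart (lform v)) pi pq.
Qed.

Lemma inner_part_deg3 z x y p : dg z = 3%N -> atv z (LE x) -> atv z (LE y) ->
  x != y -> p x = p y -> inner_part z p = p x ^+ k * binform_inner k (lfP z) 1 1.
Proof.
move=> z3 zx zy xy pxy; rewrite /inner_part -binform_inner_diag.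
by have [_ [[-> ->]|[-> ->]]] := chart_deg3_indices z3 (lf_chart (lform z)) zx zy xy; rewrite pxy.
Qed.

(* The point [e_x + e_y] lies on the two lines of an edge labeled [e_x - e_y]. *)
Lemma F_at_LD_pt u z x y : (0 < k)%N -> adj u z -> lab u z = LD x y -> dg z = 3%N ->
  (F x).@[basis_pt x \+ basis_pt y] =
  (F x).@[basis_pt x] + (F y).@[basis_pt y] + binform_inner k (lfP z) 1 1.
Proof.
move=> k0 uz uzxy z3; have zuxy := lab_symE uz uzxy.
have [xy zx zy _] := deg3_LD_labels z3 (adj_sym uz) zuxy.
have yx : y != x by rewrite eq_sym.
have zr : onl z (basis_pt x \+ basis_pt y) := onL_LD_pt (adj_sym uz) zuxy.
have [rx ry] : (basis_pt x \+ basis_pt y) x = 1 :> K /\ (basis_pt x \+ basis_pt y) y = 1 :> K.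
  by rewrite /= !basis_pt_id (basis_pt_neq xy) (basis_pt_neq yx) addr0 add0r.
have := @lform_eval _ _ x zr; rewrite rx expr1n mulr1 => <-; last exact: oner_neq0.
have [dirE exy] := chart_deg3_indices z3 (lf_chart (lform z)) zx zy xy.
rewrite binform_split // lform_coefk lform_coef0 dirE.
by case: exy => -[-> ->]; rewrite rx ry !expr1n !mulr1 // [X in X + _]addrC.
Qed.

Lemma glue_rest_on_line u p : (0 < k)%N -> onl u p ->
  diag_part p + \sum_(v | v != u) inner_part v p =
  (F (lfi u)).@[basis_pt (lfi u)] * p (lfi u) ^+ k + (F (lfq u)).@[lfdir u] * p (lfq u) ^+ k.
Proof.
move=> k0 up; have off v : v != u -> inner_part v p != 0 ->
    [/\ dg v = 3%N, adj u v, dg u != 3%N & exists x y, lab u v = LD x y].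
  by move=> vu; apply: inner_part_off_line up; rewrite eq_sym.
have := proj1 (chart_onL (lf_chart (lform u)) p) up.
case: (lform u) => i q be P /= c _; case: c => {i q be}
  [i q u3 iq atu|i q u3 iq atu|i q y z u3 uz uzqy atu] pE.
- rewrite big1 ?addr0 => [|v vu]; last first.
    by apply/eqP; apply: contraT => /(off v vu)[_ _]; rewrite u3.
  have uiq : uniq [:: i; q] by rewrite /= inE iq.
  by rewrite (diag_part_supp k0 uiq ((line_pt_basisE p iq).1 pE)) !big_cons big_nil addr0.
- rewrite big1 ?addr0 => [|v vu]; last first.
    apply/eqP; apply: contraT => /(off v vu)[_ uv _ [x [y uvxy]]].
    by have /atu[] : atv u (LD x y) by left; exists v.
  have uiq : uniq [:: i; q] by rewrite /= inE iq.
  by rewrite (diag_part_supp k0 uiq ((line_pt_basisE p iq).1 pE)) !big_cons big_nil addr0.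
have [z3 qy iq iy] := LD_chart_indices u3 uz uzqy atu.
have [p0 pyq] := (line_pt_pairE p iq iy qy).1 pE.
have [_ zq zy _] := deg3_LD_labels z3 (adj_sym uz) (lab_symE uz uzqy).
rewrite (bigD1 z) 1?eq_sym ?adj_neq //= big1 ?addr0 => [|v /andP[vu vz]]; last first.
  apply/eqP; apply: contraT => /(off v vu)[v3 uv _ _].
  by rewrite (deg3_common_nbr z3 v3 uz uv) eqxx in vz.
rewrite (inner_part_deg3 z3 zq zy qy (esym pyq)) (F_at_LD_pt k0 uz uzqy z3).
have uiqy : uniq [:: i; q; y] by rewrite /= !inE negb_or iq iy qy.
by rewrite (diag_part_supp k0 uiqy p0) !big_cons big_nil pyq; ring.
Qed.

Lemma meval_glue_on_line u p : (0 < k)%N -> onl u p ->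
  glue.@[p] = binform k (lfP u) (p (lfi u)) (p (lfq u)).
Proof.
move=> k0 up; rewrite meval_glue (bigD1 u) //= addrCA addrC glue_rest_on_line //.
by rewrite binform_split // lform_coefk lform_coef0.
Qed.

Lemma glue_on_C p v i : (0 < k)%N -> onl v p -> p i != 0 ->
  glue.@[p] * p i ^+ e i = (F i).@[p].
Proof. by move=> k0 vp pi; rewrite (meval_glue_on_line k0 vp) lform_eval. Qed.

Lemma lform_coef0_adj u w : k = 0%N -> adj u w -> (lfP u)`_0 = (lfP w)`_0.
Proof.
move=> k0 uw; have [p [j [up wp pj]]] := shared_point uw.
have pj0 : p j != 0 by rewrite pj oner_neq0.
have := lform_eval up pj0; have := lform_eval wp pj0.
by rewrite pj expr1n !mulr1 !binform_k0 // => -> ->.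
Qed.

Hypothesis adj_connected : connected_graph adj.

Lemma lform_coef0_const u v : k = 0%N -> (lfP u)`_0 = (lfP v)`_0.
Proof.
move=> k0; have /connectP[s path_s ->] := adj_connected u v.
elim: s u path_s => //= w s IHs u /andP[uw path_s].
by rewrite (lform_coef0_adj k0 uw) (IHs w path_s).
Qed.

Lemma const_on_C v0 p v i : k = 0%N -> onl v p -> p i != 0 ->
  ((lfP v0)`_0 *: 1 : {mpoly K[m]}).@[p] * p i ^+ e i = (F i).@[p].
Proof.
move=> k0 vp pi; rewrite /= mevalZ meval1 mulr1 (lform_coef0_const v0 v k0).
by rewrite -(lform_eval vp pi) binform_k0.
Qed.

Lemma glue_restriction (v0 : V) : exists H : {mpoly K[m]}, H \is k.-homog /\
  forall i, exists N : nat, inIC adj lab loopl ('X_i ^+ N * (H * 'X_i ^+ e i - F i)).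
Proof.
have [k0|k0] := posnP k.
  exists ((lfP v0)`_0 *: 1); split; first by rewrite k0 dhomogZ ?dhomog1.
  by apply: extends_of_pointwise => v p i; exact: const_on_C.
exists glue; split; first exact: glue_homog.
by apply: extends_of_pointwise => v p i; exact: glue_on_C.
Qed.

End Labeling.

Theorem theorem2p3 (K : closedFieldType) (hK : [pchar K] =i pred0)
  (V : finType) (adj : rel V) (n : nat)
  (lab : V -> V -> label n.+1) (loopl : V -> label n.+1) :
  connected_graph adj ->
  simple_graph adj ->
  degree_cond adj ->
  deg3_far adj ->
  triangle_free adj ->
  n%:Z = #|V|%:Z - genus adj ->
  admissible adj lab loopl ->
  forall k : nat, restriction_surjective adj lab loopl K k.
Proof.
move=> conn simple [deg_le3 [v0 _]] apart tri _ adm k F e Fsec.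
have [/existsP[u /eqP u0]|/existsPn deg_neq0] := boolP [exists u, deg adj u == 0%N].
  exact: restriction_isolated conn u0 F e Fsec.
exact: glue_restriction.
Qed.
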